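(* The real vector space with basis $J,H,G_a,P_a,J_a,H_a,G_{ab},P_{ab},J^*,H^*,G^*_{ab},P^*_{ab}$ with the following nonzero brackets is a Lie algebra (the double extension of $\operatorname{span}\{P_a,G_a,H_a,J_a\}$ by $\operatorname{span}\{H,J,P_{ab},G_{ab}\}$): $[J,G_a]=\epsilon_{am}G_m$, $[J,P_a]=\epsilon_{am}P_m$, $[G_a,H]=-\epsilon_{am}P_m$, $[G_a,G_b]=\epsilon_{ab}H^*$, $[G_a,P_b]=\epsilon_{ab}J^*$; $[J,J_a]=\epsilon_{am}J_m$, $[J,G_{ab}]=-\epsilon_{m(a}G_{b)m}$, $[J,H_a]=\epsilon_{am}H_m$, $[J,P_{ab}]=-\epsilon_{m(a}P_{b)m}$, $[G_a,G_{bc}]=-\epsilon_{a(b}J_{c)}$, $[G_a,P_{bc}]=-\epsilon_{a(b}H_{c)}$, $[H,J_a]=\epsilon_{am}H_m$, $[H,G_{ab}]=-\epsilon_{m(a}P_{b)m}$, $[P_a,G_{bc}]=-\epsilon_{a(b}H_{c)}$; $[J_a,G_{bc}]=\delta_{a(b}\epsilon_{c)m}G_m$, $[J_a,P_{bc}]=\delta_{a(b}\epsilon_{c)m}P_m$, $[G_{ab},G_{cd}]=\delta_{(a(c}\epsilon_{d)b)}J$, $[G_{ab},H_c]=-\delta_{c(a}\epsilon_{b)m}P_m$, $[G_{ab},P_{cd}]=\delta_{(a(c}\epsilon_{d)b)}H$; $[G_a,J_b]=-\epsilon_{am}P^*_{mb}$, $[G_a,H_b]=-\epsilon_{am}G^*_{mb}$,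 $[P_a,J_b]=-\epsilon_{am}G^*_{mb}$, $[J_a,J_b]=-\epsilon_{ab}H^*$, $[J_a,H_b]=-\epsilon_{ab}J^*$; $[J,P^*_{ab}]=-\epsilon_{m(a}P^*_{b)m}$, $[J,G^*_{ab}]=-\epsilon_{m(a}G^*_{b)m}$, $[H,P^*_{ab}]=-\epsilon_{m(a}G^*_{b)m}$, $[G_{ab},J^*]=-\epsilon_{m(a}G^*_{b)m}$, $[G_{ab},H^*]=-\epsilon_{m(a}P^*_{b)m}$, $[G_{ab},G^*_{cd}]=\epsilon_{(a(c}\delta_{d)b)}J^*$, $[G_{ab},P^*_{cd}]=\epsilon_{(a(c}\delta_{d)b)}H^*$, $[P_{ab},H^*]=-\epsilon_{m(a}G^*_{b)m}$, $[P_{ab},P^*_{cd}]=\epsilon_{(a(c}\delta_{d)b)}J^*$. It admits the invariant metric with nonzero entries $\langle P_a,G_b\rangle=\delta_{ab}$, $\langle H_a,J_b\rangle=-\delta_{ab}$, $\langle H,H^*\rangle=1$, $\langle J,J^*\rangle=1$, $\langle P_{ab},P^*_{cd}\rangle=\delta_{a(c}\delta_{d)b}$, $\langle G_{ab},G^*_{cd}\rangle=\delta_{a(c}\delta_{d)b}$.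
   Context: Indices $a,b,c,d,m\in\{1,2\}$, summed when repeated, $\epsilon_{12}=1$; $G_{ab},P_{ab},G^*_{ab},P^*_{ab}$ are symmetric. Symmetrization without normalization ($T_{(ab)}=T_{ab}+T_{ba}$, nested from outermost to innermost). An invariant metric is a symmetric nondegenerate bilinear form with $\langle[Z,X],Y\rangle+\langle X,[Z,Y]\rangle=0$. *)

From HB Require Import structures.
From mathcomp Require Import all_boot all_order all_algebra.
Set Implicit Arguments. Unset Strict Implicit. Unset Printing Implicit Defensive.
Import Order.TTheory GRing.Theory Num.Theory.
Local Open Scope ring_scope.

(* Indices a,b,... in {1,2} are
   represented by 'I_2 (0 ~ 1, 1 ~ 2).  The symmetric families
   G_ab, P_ab, G*_ab, P*_ab take two indices; gGG a b and gGG b a denote the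
   SAME basis vector (see [code]). *)
Inductive gen : Type :=
  | gJ | gH
  | gG of 'I_2 | gP of 'I_2 | gJa of 'I_2 | gHa of 'I_2
  | gGG of 'I_2 & 'I_2 | gPP of 'I_2 & 'I_2
  | gJs | gHs
  | gGs of 'I_2 & 'I_2 | gPs of 'I_2 & 'I_2.

(* position of the basis vector in {0,..,23}; symmetric pairs (a,b) are sent
   to a+b (i.e. 11 -> 0, 12 = 21 -> 1, 22 -> 2) *)
Definition code (g : gen) : nat :=
  match g with
  | gJ => 0 | gH => 1
  | gG a => 2 + a | gP a => 4 + a | gJa a => 6 + a | gHa a => 8 + a
  | gGG a b => 10 + (a + b) | gPP a b => 13 + (a + b)
  | gJs => 16 | gHs => 17
  | gGs a b => 18 + (a + b) | gPs a b => 21 + (a + b)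
  end%N.

Definition o0 : 'I_2 := ord0.
Definition o1 : 'I_2 := ord_max.

Definition decode (i : 'I_24) : gen :=
  match nat_of_ord i with
  | 0 => gJ | 1 => gH
  | 2 => gG o0 | 3 => gG o1 | 4 => gP o0 | 5 => gP o1
  | 6 => gJa o0 | 7 => gJa o1 | 8 => gHa o0 | 9 => gHa o1
  | 10 => gGG o0 o0 | 11 => gGG o0 o1 | 12 => gGG o1 o1
  | 13 => gPP o0 o0 | 14 => gPP o0 o1 | 15 => gPP o1 o1
  | 16 => gJs | 17 => gHs
  | 18 => gGs o0 o0 | 19 => gGs o0 o1 | 20 => gGs o1 o1
  | 21 => gPs o0 o0 | 22 => gPs o0 o1 | _ => gPs o1 o1
  end.

Section Alg.
Variable R : realFieldType.

Definition V := 'rV[R]_24.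

Definition e (g : gen) : V := delta_mx 0 (inord (code g)).

Definition eps (a b : 'I_2) : R :=
  if (a == o0) && (b == o1) then 1
  else if (a == o1) && (b == o0) then -1 else 0.
Definition dlt (a b : 'I_2) : R := (a == b)%:R.

(* - eps_{m(a} X_{b)m} = -(eps_{ma} X_{bm} + eps_{mb} X_{am}) *)
Definition symE (X : 'I_2 -> 'I_2 -> gen) (a b : 'I_2) : V :=
  - \sum_(m < 2) (eps m a *: e (X b m) + eps m b *: e (X a m)).

(* delta_{(a(c} eps_{d)b)} and eps_{(a(c} delta_{d)b)} *)
Definition Sde (a b c d : 'I_2) : R :=
  dlt a c * eps d b + dlt a d * eps c b + dlt b c * eps d a + dlt b d * eps c a.
Definition Sed (a b c d : 'I_2) : R :=
  eps a c * dlt d b + eps a d * dlt c b + eps b c * dlt d a + eps b d * dlt c a.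

Definition tbl (x y : gen) : option V :=
  match x, y with
  | gJ, gG a => Some (\sum_(m < 2) eps a m *: e (gG m))
  | gJ, gP a => Some (\sum_(m < 2) eps a m *: e (gP m))
  | gG a, gH => Some (- \sum_(m < 2) eps a m *: e (gP m))
  | gG a, gG b => Some (eps a b *: e gHs)
  | gG a, gP b => Some (eps a b *: e gJs)
  | gJ, gJa a => Some (\sum_(m < 2) eps a m *: e (gJa m))
  | gJ, gGG a b => Some (symE gGG a b)
  | gJ, gHa a => Some (\sum_(m < 2) eps a m *: e (gHa m))
  | gJ, gPP a b => Some (symE gPP a b)
  | gG a, gGG b c => Some (- (eps a b *: e (gJa c) + eps a c *: e (gJa b)))
  | gG a, gPP b c => Some (- (eps a b *: e (gHa c) + eps a c *: e (gHa b)))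
  | gH, gJa a => Some (\sum_(m < 2) eps a m *: e (gHa m))
  | gH, gGG a b => Some (symE gPP a b)
  | gP a, gGG b c => Some (- (eps a b *: e (gHa c) + eps a c *: e (gHa b)))
  | gJa a, gGG b c =>
      Some (\sum_(m < 2) (dlt a b * eps c m + dlt a c * eps b m) *: e (gG m))
  | gJa a, gPP b c =>
      Some (\sum_(m < 2) (dlt a b * eps c m + dlt a c * eps b m) *: e (gP m))
  | gGG a b, gGG c d => Some (Sde a b c d *: e gJ)
  | gGG a b, gHa c =>
      Some (- \sum_(m < 2) (dlt c a * eps b m + dlt c b * eps a m) *: e (gP m))
  | gGG a b, gPP c d => Some (Sde a b c d *: e gH)
  | gG a, gJa b => Some (- \sum_(m < 2) eps a m *: e (gPs m b))
  | gG a, gHa b => Some (- \sum_(m < 2) eps a m *: e (gGs m b))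
  | gP a, gJa b => Some (- \sum_(m < 2) eps a m *: e (gGs m b))
  | gJa a, gJa b => Some (- (eps a b *: e gHs))
  | gJa a, gHa b => Some (- (eps a b *: e gJs))
  | gJ, gPs a b => Some (symE gPs a b)
  | gJ, gGs a b => Some (symE gGs a b)
  | gH, gPs a b => Some (symE gGs a b)
  | gGG a b, gJs => Some (symE gGs a b)
  | gGG a b, gHs => Some (symE gPs a b)
  | gGG a b, gGs c d => Some (Sed a b c d *: e gJs)
  | gGG a b, gPs c d => Some (Sed a b c d *: e gHs)
  | gPP a b, gHs => Some (symE gGs a b)
  | gPP a b, gPs c d => Some (Sed a b c d *: e gJs)
  | _, _ => None
  end.

Definition brg (x y : gen) : V :=
  match tbl x y with
  | Some v => v
  | None => match tbl y x with Some v => - v | None => 0 end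
  end.

Definition liebr (x y : V) : V :=
  \sum_(i < 24) \sum_(j < 24) (x 0 i * y 0 j) *: brg (decode i) (decode j).

Definition mtbl (x y : gen) : option R :=
  match x, y with
  | gP a, gG b => Some (dlt a b)
  | gHa a, gJa b => Some (- dlt a b)
  | gH, gHs => Some 1
  | gJ, gJs => Some 1
  | gPP a b, gPs c d => Some (dlt a c * dlt d b + dlt a d * dlt c b)
  | gGG a b, gGs c d => Some (dlt a c * dlt d b + dlt a d * dlt c b)
  | _, _ => None
  end.

Definition mg (x y : gen) : R :=
  match mtbl x y with
  | Some r => r
  | None => match mtbl y x with Some r => r | None => 0 end
  end.

Definition metr (x y : V) : R :=
  \sum_(i < 24) \sum_(j < 24) x 0 i * y 0 j * mg (decode i) (decode j).

End Alg.

From HB Require Import structures.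
From mathcomp Require Import all_boot all_order all_algebra ring.
Import GRing.Theory Num.Theory.
Set Implicit Arguments. Unset Strict Implicit. Unset Printing Implicit Defensive.
Local Open Scope ring_scope.

(* All five properties are multilinear, so they amount to finitely many identities between
   the structure constants c_ij^k of the bracket and the entries g_ij of the metric in the
   basis: antisymmetry and the Jacobi identity for c, symmetry of g, invariance
   c_ij^a g_al + c_il^a g_ja = 0, and nondegeneracy, which holds because every basis vector
   pairs nontrivially with exactly one other (the dual one).  All constants are integers; the
   identities are decided by computation on a sparse integer copy of the bracket table, which
   agrees coefficientwise with the real one. *)

Section StructureConstants.
Variables (R : numDomainType) (n : nat).
Variables (c : 'I_n -> 'I_n -> 'I_n -> R) (g : 'I_n -> 'I_n -> R).
Implicit Types x y z : 'rV[R]_n.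

Definition sc_bracket x y : 'rV[R]_n :=
  \row_k \sum_i \sum_j x 0 i * y 0 j * c i j k.

Definition gram_form x y : R := \sum_i \sum_j x 0 i * y 0 j * g i j.

Lemma sum3_rot (F : 'I_n -> 'I_n -> 'I_n -> R) :
  \sum_a \sum_b \sum_c F a b c = \sum_c \sum_a \sum_b F a b c.
Proof.
rewrite (eq_bigr (fun a => \sum_c \sum_b F a b c)); last by move=> a _; rewrite exchange_big.
by rewrite exchange_big.
Qed.

Lemma sc_bracket_alt (c_anti : forall i j k, c i j k = - c j i k) x :
  sc_bracket x x = 0.
Proof.
apply/rowP => k; rewrite !mxE; set S := \sum_i _.
have S_opp : S = - S.
  rewrite {1}/S exchange_big -sumrN; apply: eq_bigr => i _.
  rewrite -sumrN; apply: eq_bigr => j _.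
  by rewrite {1}c_anti; ring.
have : S *+ 2 == 0 by rewrite mulr2n {1}S_opp addNr.
by rewrite mulrn_eq0 => /eqP.
Qed.

Lemma sc_bracket_nested x y z k :
  sc_bracket x (sc_bracket y z) 0 k =
  \sum_i \sum_j \sum_l x 0 i * y 0 j * z 0 l * \sum_m c j l m * c i m k.
Proof.
rewrite mxE; apply: eq_bigr => i _.
under eq_bigr => m _ do rewrite mxE.
rewrite (eq_bigr (fun m => \sum_j \sum_l x 0 i * y 0 j * z 0 l * (c j l m * c i m k))).
  rewrite exchange_big; apply: eq_bigr => j _.
  by rewrite exchange_big; apply: eq_bigr => l _; rewrite mulr_sumr.
move=> m _; rewrite mulr_sumr mulr_suml; apply: eq_bigr => j _.
by rewrite mulr_sumr mulr_suml; apply: eq_bigr => l _; ring.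
Qed.

Lemma sc_bracket_jacobi
    (c_jacobi : forall i j l k,
       \sum_m (c j l m * c i m k + c l i m * c j m k + c i j m * c l m k) = 0)
    x y z :
  sc_bracket x (sc_bracket y z) + sc_bracket y (sc_bracket z x)
    + sc_bracket z (sc_bracket x y) = 0.
Proof.
apply/rowP => k; rewrite [RHS]mxE [LHS]mxE [X in X + _]mxE !sc_bracket_nested.
rewrite [X in _ + X + _]sum3_rot [X in _ + X]sum3_rot [X in _ + X]sum3_rot.
rewrite -!big_split; apply: big1 => i _; rewrite -!big_split; apply: big1 => j _.
rewrite -!big_split; apply: big1 => l _ /=.
have := c_jacobi i j l k; rewrite !big_split /= => jac_ijlk.
by rewrite -[RHS](mulr0 (x 0 i * y 0 j * z 0 l)) -[X in _ = _ * X]jac_ijlk; ring.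
Qed.

Lemma gram_form_sym (g_sym : forall i j, g i j = g j i) x y :
  gram_form x y = gram_form y x.
Proof.
rewrite /gram_form exchange_big; apply: eq_bigr => i _; apply: eq_bigr => j _.
by rewrite g_sym; ring.
Qed.

Lemma gram_form_bracketl x y z :
  gram_form (sc_bracket z x) y =
  \sum_i \sum_j \sum_l z 0 i * x 0 j * y 0 l * \sum_a c i j a * g a l.
Proof.
rewrite /gram_form (eq_bigr (fun a => \sum_l \sum_i \sum_j
    z 0 i * x 0 j * y 0 l * (c i j a * g a l))); last first.
  move=> a _; apply: eq_bigr => l _; rewrite mxE !mulr_suml; apply: eq_bigr => i _.
  by rewrite !mulr_suml; apply: eq_bigr => j _; ring.
rewrite sum3_rot; apply: eq_bigr => i _; rewrite sum3_rot; apply: eq_bigr => j _.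
by rewrite exchange_big; apply: eq_bigr => l _; rewrite mulr_sumr.
Qed.

Lemma gram_form_bracketr x y z :
  gram_form x (sc_bracket z y) =
  \sum_i \sum_j \sum_l z 0 i * x 0 j * y 0 l * \sum_b c i l b * g j b.
Proof.
rewrite /gram_form (eq_bigr (fun j => \sum_b \sum_i \sum_l
    z 0 i * x 0 j * y 0 l * (c i l b * g j b))); last first.
  move=> j _; apply: eq_bigr => b _; rewrite mxE mulr_sumr mulr_suml; apply: eq_bigr => i _.
  by rewrite mulr_sumr mulr_suml; apply: eq_bigr => l _; ring.
rewrite sum3_rot; apply: eq_bigr => i _; apply: eq_bigr => j _.
by rewrite exchange_big; apply: eq_bigr => l _; rewrite mulr_sumr.
Qed.

Lemma gram_form_invariant
    (cg_invariant : forall i j l, \sum_a (c i j a * g a l + c i l a * g j a) = 0)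
    x y z :
  gram_form (sc_bracket z x) y + gram_form x (sc_bracket z y) = 0.
Proof.
rewrite gram_form_bracketl gram_form_bracketr -big_split; apply: big1 => i _.
rewrite -big_split; apply: big1 => j _; rewrite -big_split; apply: big1 => l _ /=.
by rewrite -mulrDr -big_split cg_invariant mulr0.
Qed.

Lemma gram_form_nondegenerate
    (g_partner : forall k, exists p, forall i, (g i p != 0) = (i == k)) x :
  (forall y, gram_form x y = 0) -> x = 0.
Proof.
move=> x_null; apply/rowP => k; rewrite mxE.
have [p g_p] := g_partner k.
have gram_delta i : \sum_j x 0 i * (delta_mx 0 p : 'rV_n) 0 j * g i j = x 0 i * g i p.
  rewrite (bigD1 p) //= big1 => [|j jp]; last by rewrite mxE (negbTE jp) andbF mulr0 mul0r.
  by rewrite mxE !eqxx mulr1 addr0.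
have := x_null (delta_mx 0 p); rewrite /gram_form (eq_bigr _ (fun i _ => gram_delta i)).
rewrite (bigD1 k) //= big1 => [|i ik]; last first.
  by have := g_p i; rewrite (negbTE ik) => /negbFE/eqP ->; rewrite mulr0.
by rewrite addr0 => /eqP; rewrite mulf_eq0 -[g k p == 0]negbK g_p eqxx orbF => /eqP.
Qed.

End StructureConstants.

(* Finitely supported integer vectors, as lists of (coordinate, coefficient) pairs;
   repeated coordinates add up. *)
Definition svec := seq (nat * int).

Definition svcoef (s : svec) (k : nat) : int :=
  foldr (fun p acc => (if p.1 == k then p.2 else 0) + acc) 0 s.
Definition svdot (s : svec) (f : nat -> int) : int :=
  foldr (fun p acc => p.2 * f p.1 + acc) 0 s.
Definition svscale (a : int) (s : svec) : svec := [seq (p.1, a * p.2) | p <- s].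
Definition svopp (s : svec) : svec := svscale (-1) s.
Definition svbasis (g : gen) : svec := [:: (code g, 1)].
Definition svadd (s t : svec) : svec := s ++ t.
Definition svsum2 (F : 'I_2 -> svec) : svec := svadd (F o0) (F o1).
Definition svlin (f : nat -> svec) (s : svec) : svec :=
  flatten [seq svscale p.2 (f p.1) | p <- s].
Definition svnull (s : svec) : bool := all (fun k => svcoef s k == 0) (unzip1 s).

(* Kept opaque to [simpl] so that the real and integer bracket tables unfold in lockstep
   in [brg_coord]. *)
Arguments svcoef : simpl never.
Arguments svscale : simpl never.
Arguments svopp : simpl never.
Arguments svbasis : simpl never.
Arguments svadd : simpl never.
Arguments svsum2 : simpl never.

Lemma svcoef_cat s t k : svcoef (s ++ t) k = svcoef s k + svcoef t k.
Proof. by elim: s => [|p s IH]; rewrite /svcoef /= ?add0r // -addrA -IH. Qed.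

Lemma svcoef_scale a s k : svcoef (svscale a s) k = a * svcoef s k.
Proof.
elim: s => [|p s IH]; first by rewrite /svcoef /= mulr0.
rewrite /svcoef /= -/(svcoef (svscale a s) k) -/(svcoef s k) IH mulrDr.
by case: ifP; rewrite ?mulr0.
Qed.

Lemma svcoef_opp s k : svcoef (svopp s) k = - svcoef s k.
Proof. by rewrite svcoef_scale mulN1r. Qed.

Lemma svcoef_add s t k : svcoef (svadd s t) k = svcoef s k + svcoef t k.
Proof. exact: svcoef_cat. Qed.

Lemma svcoef_sum2 F k : svcoef (svsum2 F) k = svcoef (F o0) k + svcoef (F o1) k.
Proof. exact: svcoef_add. Qed.

Lemma svcoef_notin s k : k \notin unzip1 s -> svcoef s k = 0.
Proof.
elim: s => [|p s IH] //=; rewrite inE negb_or => /andP[kp ks].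
by rewrite /svcoef /= -/(svcoef _ k) IH // eq_sym (negbTE kp) add0r.
Qed.

Lemma svnullP s : svnull s -> forall k, svcoef s k = 0.
Proof.
move=> /allP s_null k; case: (boolP (k \in unzip1 s)) => [/s_null/eqP //|].
exact: svcoef_notin.
Qed.

Lemma svcoef_lin f s k : svcoef (svlin f s) k = svdot s (fun m => svcoef (f m) k).
Proof.
by elim: s => [|p s IH] //=; rewrite /svlin /= svcoef_cat svcoef_scale -IH.
Qed.

Lemma svdot_sum n s f : all (fun m => m < n)%N (unzip1 s) ->
  svdot s f = \sum_(m < n) svcoef s m * f m.
Proof.
elim: s => [_|p s IH /= /andP[pn sn]].
  by rewrite big1 // => m _; rewrite mul0r.
rewrite /svcoef /=; under eq_bigr => m _ do rewrite -/(svcoef _ m) mulrDl.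
rewrite big_split /= -IH // (bigD1 (Ordinal pn)) //= eqxx big1 ?addr0 // => m mp.
suff /negbTE-> : p.1 != m by rewrite mul0r.
by apply: contra mp => /eqP pm; apply/eqP/val_inj.
Qed.

Definition epsZ (a b : 'I_2) : int :=
  if (a == o0) && (b == o1) then 1
  else if (a == o1) && (b == o0) then -1 else 0.
Definition dltZ (a b : 'I_2) : int := (a == b)%:Z.

Definition symEZ (X : 'I_2 -> 'I_2 -> gen) (a b : 'I_2) : svec :=
  svopp (svsum2 (fun m =>
    svadd (svscale (epsZ m a) (svbasis (X b m))) (svscale (epsZ m b) (svbasis (X a m))))).
Definition SdeZ (a b c d : 'I_2) : int :=
  dltZ a c * epsZ d b + dltZ a d * epsZ c b + dltZ b c * epsZ d a + dltZ b d * epsZ c a.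
Definition SedZ (a b c d : 'I_2) : int :=
  epsZ a c * dltZ d b + epsZ a d * dltZ c b + epsZ b c * dltZ d a + epsZ b d * dltZ c a.

Definition tblZ (x y : gen) : option svec :=
  match x, y with
  | gJ, gG a => Some (svsum2 (fun m => svscale (epsZ a m) (svbasis (gG m))))
  | gJ, gP a => Some (svsum2 (fun m => svscale (epsZ a m) (svbasis (gP m))))
  | gG a, gH => Some (svopp (svsum2 (fun m => svscale (epsZ a m) (svbasis (gP m)))))
  | gG a, gG b => Some (svscale (epsZ a b) (svbasis gHs))
  | gG a, gP b => Some (svscale (epsZ a b) (svbasis gJs))
  | gJ, gJa a => Some (svsum2 (fun m => svscale (epsZ a m) (svbasis (gJa m))))
  | gJ, gGG a b => Some (symEZ gGG a b)
  | gJ, gHa a => Some (svsum2 (fun m => svscale (epsZ a m) (svbasis (gHa m))))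
  | gJ, gPP a b => Some (symEZ gPP a b)
  | gG a, gGG b c =>
      Some (svopp (svadd (svscale (epsZ a b) (svbasis (gJa c)))
                         (svscale (epsZ a c) (svbasis (gJa b)))))
  | gG a, gPP b c =>
      Some (svopp (svadd (svscale (epsZ a b) (svbasis (gHa c)))
                         (svscale (epsZ a c) (svbasis (gHa b)))))
  | gH, gJa a => Some (svsum2 (fun m => svscale (epsZ a m) (svbasis (gHa m))))
  | gH, gGG a b => Some (symEZ gPP a b)
  | gP a, gGG b c =>
      Some (svopp (svadd (svscale (epsZ a b) (svbasis (gHa c)))
                         (svscale (epsZ a c) (svbasis (gHa b)))))
  | gJa a, gGG b c =>
      Some (svsum2 (fun m => svscale (dltZ a b * epsZ c m + dltZ a c * epsZ b m) (svbasis (gG m))))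
  | gJa a, gPP b c =>
      Some (svsum2 (fun m => svscale (dltZ a b * epsZ c m + dltZ a c * epsZ b m) (svbasis (gP m))))
  | gGG a b, gGG c d => Some (svscale (SdeZ a b c d) (svbasis gJ))
  | gGG a b, gHa c =>
      Some (svopp (svsum2 (fun m =>
        svscale (dltZ c a * epsZ b m + dltZ c b * epsZ a m) (svbasis (gP m)))))
  | gGG a b, gPP c d => Some (svscale (SdeZ a b c d) (svbasis gH))
  | gG a, gJa b => Some (svopp (svsum2 (fun m => svscale (epsZ a m) (svbasis (gPs m b)))))
  | gG a, gHa b => Some (svopp (svsum2 (fun m => svscale (epsZ a m) (svbasis (gGs m b)))))
  | gP a, gJa b => Some (svopp (svsum2 (fun m => svscale (epsZ a m) (svbasis (gGs m b)))))
  | gJa a, gJa b => Some (svopp (svscale (epsZ a b) (svbasis gHs)))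
  | gJa a, gHa b => Some (svopp (svscale (epsZ a b) (svbasis gJs)))
  | gJ, gPs a b => Some (symEZ gPs a b)
  | gJ, gGs a b => Some (symEZ gGs a b)
  | gH, gPs a b => Some (symEZ gGs a b)
  | gGG a b, gJs => Some (symEZ gGs a b)
  | gGG a b, gHs => Some (symEZ gPs a b)
  | gGG a b, gGs c d => Some (svscale (SedZ a b c d) (svbasis gJs))
  | gGG a b, gPs c d => Some (svscale (SedZ a b c d) (svbasis gHs))
  | gPP a b, gHs => Some (symEZ gGs a b)
  | gPP a b, gPs c d => Some (svscale (SedZ a b c d) (svbasis gJs))
  | _, _ => None
  end.

Definition brgZ (x y : gen) : svec :=
  match tblZ x y with
  | Some v => v
  | None => match tblZ y x with Some v => svopp v | None => [::] end
  end.

Definition mtblZ (x y : gen) : option int :=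
  match x, y with
  | gP a, gG b => Some (dltZ a b)
  | gHa a, gJa b => Some (- dltZ a b)
  | gH, gHs => Some 1
  | gJ, gJs => Some 1
  | gPP a b, gPs c d => Some (dltZ a c * dltZ d b + dltZ a d * dltZ c b)
  | gGG a b, gGs c d => Some (dltZ a c * dltZ d b + dltZ a d * dltZ c b)
  | _, _ => None
  end.

Definition mgZ (x y : gen) : int :=
  match mtblZ x y with
  | Some r => r
  | None => match mtblZ y x with Some r => r | None => 0 end
  end.

(* [decode i] reduces to [decodeN i]. *)
Definition decodeN (n : nat) : gen :=
  match n with
  | 0 => gJ | 1 => gH
  | 2 => gG o0 | 3 => gG o1 | 4 => gP o0 | 5 => gP o1
  | 6 => gJa o0 | 7 => gJa o1 | 8 => gHa o0 | 9 => gHa o1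
  | 10 => gGG o0 o0 | 11 => gGG o0 o1 | 12 => gGG o1 o1
  | 13 => gPP o0 o0 | 14 => gPP o0 o1 | 15 => gPP o1 o1
  | 16 => gJs | 17 => gHs
  | 18 => gGs o0 o0 | 19 => gGs o0 o1 | 20 => gGs o1 o1
  | 21 => gPs o0 o0 | 22 => gPs o0 o1 | _ => gPs o1 o1
  end%N.

Definition brZ (i j : nat) : svec := brgZ (decodeN i) (decodeN j).
Definition cZ (i j k : nat) : int := svcoef (brZ i j) k.
Definition mZ (i j : nat) : int := mgZ (decodeN i) (decodeN j).

Definition jacobiZ (i j l : nat) : svec :=
  svlin (brZ i) (brZ j l) ++ svlin (brZ j) (brZ l i) ++ svlin (brZ l) (brZ i j).

Definition all24 (P : pred nat) : bool := all P (iota 0 24).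

Lemma all24P P : all24 P -> forall i : 'I_24, P i.
Proof. by move=> /allP P24 i; apply: P24; rewrite mem_iota /=. Qed.

Fact brZ_supportb :
  all24 (fun i => all24 (fun j => all (fun m => m < 24)%N (unzip1 (brZ i j)))).
Proof. vm_cast_no_check (erefl true). Qed.

Fact brZ_antib : all24 (fun i => all24 (fun j => svnull (brZ i j ++ brZ j i))).
Proof. vm_cast_no_check (erefl true). Qed.

Fact brZ_jacobib : all24 (fun i => all24 (fun j => all24 (fun l => svnull (jacobiZ i j l)))).
Proof. vm_cast_no_check (erefl true). Qed.

Fact mZ_symb : all24 (fun i => all24 (fun j => mZ i j == mZ j i)).
Proof. vm_cast_no_check (erefl true). Qed.

Fact mZ_invariantb : all24 (fun i => all24 (fun j => all24 (fun l =>
  svdot (brZ i j) (mZ^~ l) + svdot (brZ i l) (mZ j) == 0))).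
Proof. vm_cast_no_check (erefl true). Qed.

Fact mZ_partnerb :
  all24 (fun k => has (fun p => all24 (fun i => (mZ i p != 0) == (i == k))) (iota 0 24)).
Proof. vm_cast_no_check (erefl true). Qed.

Lemma brZ_support (i j : 'I_24) : all (fun m => m < 24)%N (unzip1 (brZ i j)).
Proof. exact: all24P (all24P brZ_supportb i) j. Qed.

Lemma cZ_anti (i j k : 'I_24) : cZ i j k = - cZ j i k.
Proof.
have /svnullP/(_ k) := all24P (all24P brZ_antib i) j.
by rewrite svcoef_cat => /eqP; rewrite addr_eq0 => /eqP.
Qed.

Lemma cZ_jacobi (i j l k : 'I_24) :
  \sum_(m < 24) (cZ j l m * cZ i m k + cZ l i m * cZ j m k + cZ i j m * cZ l m k) = 0.
Proof.
have /svnullP/(_ k) := all24P (all24P (all24P brZ_jacobib i) j) l.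
rewrite !svcoef_cat !svcoef_lin !(svdot_sum _ (brZ_support _ _)).
by rewrite addrA !big_split.
Qed.

Lemma mZ_sym (i j : 'I_24) : mZ i j = mZ j i.
Proof. exact/eqP/(all24P (all24P mZ_symb i) j). Qed.

Lemma cZ_mZ_invariant (i j l : 'I_24) :
  \sum_(a < 24) (cZ i j a * mZ a l + cZ i l a * mZ j a) = 0.
Proof.
have /eqP := all24P (all24P (all24P mZ_invariantb i) j) l.
by rewrite !(svdot_sum _ (brZ_support _ _)) big_split.
Qed.

Lemma mZ_partner (k : 'I_24) : exists p : 'I_24, forall i : 'I_24, (mZ i p != 0) = (i == k).
Proof.
have /hasP[p] := all24P mZ_partnerb k; rewrite mem_iota /= => p24 /all24P mZ_p.
by exists (Ordinal p24) => i; have /eqP := mZ_p i.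
Qed.

Section Realization.
Variable R : realFieldType.

Definition cR (i j k : 'I_24) : R := (cZ i j k)%:~R.
Definition mR (i j : 'I_24) : R := (mZ i j)%:~R.

Lemma code_lt g : (code g < 24)%N.
Proof.
by case: g => *; repeat match goal with a : 'I_2 |- _ => case: a => [[|[|]]] //= _ end.
Qed.

Lemma e_coord g k : e R g 0 k = (svcoef (svbasis g) k)%:~R.
Proof.
rewrite /e mxE /svcoef /= addr0 eq_sym -val_eqE /= inordK ?code_lt //.
by case: eqP.
Qed.

Lemma eps_int a b : eps R a b = (epsZ a b)%:~R.
Proof. by rewrite /eps /epsZ; case: ifP => _; [|case: ifP => _]. Qed.

Lemma sum_ord2_coord (F : 'I_2 -> V R) k :
  (\sum_(m < 2) F m) 0 k = F o0 0 k + F o1 0 k.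
Proof. by rewrite summxE big_ord_recl big_ord1; congr (_ + F _ 0 k); apply/val_inj. Qed.

Lemma brg_coord x y k : brg R x y 0 k = (svcoef (brgZ x y) k)%:~R.
Proof.
case: x => [||a|a|a|a|a b|a b|||a b|a b]; case: y => [||c|c|c|c|c d|c d|||c d|c d];
rewrite /brg /brgZ /= /symE /symEZ /Sde /SdeZ /Sed /SedZ;
rewrite ?(e_coord, sum_ord2_coord, mxE, eps_int);
rewrite ?(svcoef_add, svcoef_opp, svcoef_scale, svcoef_sum2);
by rewrite ?(rmorphD, rmorphN, rmorphM).
Qed.

Lemma mg_int x y : mg R x y = (mgZ x y)%:~R.
Proof.
by case: x => [||a|a|a|a|a b|a b|||a b|a b]; case: y => [||c|c|c|c|c d|c d|||c d|c d];
  rewrite /mg /mgZ /= ?(rmorphD, rmorphN, rmorphM).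
Qed.

Lemma liebr_sc_bracket x y : liebr x y = sc_bracket cR x y.
Proof.
apply/rowP => k; rewrite !mxE summxE; apply: eq_bigr => i _.
by rewrite summxE; apply: eq_bigr => j _; rewrite mxE brg_coord.
Qed.

Lemma metr_gram_form x y : metr x y = gram_form mR x y.
Proof. by apply: eq_bigr => i _; apply: eq_bigr => j _; rewrite mg_int. Qed.

Lemma cR_anti i j k : cR i j k = - cR j i k.
Proof. by rewrite /cR cZ_anti rmorphN. Qed.

Lemma cR_jacobi i j l k :
  \sum_m (cR j l m * cR i m k + cR l i m * cR j m k + cR i j m * cR l m k) = 0.
Proof.
have /(congr1 (fun n : int => n%:~R : R)) := cZ_jacobi i j l k.
rewrite rmorph_sum rmorph0 => sum0; rewrite -[RHS]sum0.
by apply: eq_bigr => m _; rewrite !rmorphD !rmorphM.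
Qed.

Lemma mR_sym i j : mR i j = mR j i.
Proof. by rewrite /mR mZ_sym. Qed.

Lemma cR_mR_invariant i j l : \sum_a (cR i j a * mR a l + cR i l a * mR j a) = 0.
Proof.
have /(congr1 (fun n : int => n%:~R : R)) := cZ_mZ_invariant i j l.
rewrite rmorph_sum rmorph0 => sum0; rewrite -[RHS]sum0.
by apply: eq_bigr => a _; rewrite !rmorphD !rmorphM.
Qed.

Lemma mR_partner k : exists p, forall i, (mR i p != 0) = (i == k).
Proof. by have [p mZ_p] := mZ_partner k; exists p => i; rewrite intr_eq0. Qed.

End Realization.

Theorem mainTheorem11 (R : realFieldType) :
  (forall x : V R, liebr x x = 0) /\
  (forall x y z : V R,
      liebr x (liebr y z) + liebr y (liebr z x) + liebr z (liebr x y) = 0) /\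
  (forall x y : V R, metr x y = metr y x) /\
  (forall x : V R, (forall y : V R, metr x y = 0) -> x = 0) /\
  (forall x y z : V R, metr (liebr z x) y + metr x (liebr z y) = 0).
Proof.
split; [|split; [|split; [|split]]].
- by move=> x; rewrite liebr_sc_bracket sc_bracket_alt //; apply: cR_anti.
- by move=> x y z; rewrite !liebr_sc_bracket sc_bracket_jacobi //; apply: cR_jacobi.
- by move=> x y; rewrite !metr_gram_form gram_form_sym //; apply: mR_sym.
- move=> x x_null; apply: (gram_form_nondegenerate (@mR_partner R)) => y.
  by rewrite -metr_gram_form.
- move=> x y z; rewrite !liebr_sc_bracket !metr_gram_form.
  by apply: gram_form_invariant; apply: cR_mR_invariant.
Qed.
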